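(* Every orbit of the action of $\mathrm{Aut}(\mathbb{G})$ on $\mathbb{G}$ that is three-dimensional, namely every set $\mathscr{L}_a=\{(z_1+z_2,z_1z_2):z_1,z_2\in\mathbb{D},\ |\frac{z_1-z_2}{1-\overline{z_1}z_2}|=a\}$ with $a\in(0,1)$, is a strongly pseudoconvex real hypersurface in $\mathbb{G}$.
   Context: $\mathbb{D}$ is the open unit disc in $\mathbb{C}$ and $\mathbb{G}=\{(z_1+z_2,z_1z_2):z_1,z_2\in\mathbb{D}\}\subset\mathbb{C}^2$ is the symmetrized bidisc. Its holomorphic automorphism group is $\mathrm{Aut}(\mathbb{G})=\{H_\varphi:\varphi\in\mathrm{Aut}(\mathbb{D})\}$, where $H_\varphi(z_1+z_2,z_1z_2)=(\varphi(z_1)+\varphi(z_2),\varphi(z_1)\varphi(z_2))$. The orbits of this action are the sets $\mathscr{L}_a$, $a\in[0,1)$; $\mathscr{L}_0=\{(2z,z^2):z\in\mathbb{D}\}$ is a complex curve and the others are real three-dimensional. *)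

From Stdlib Require Import Reals.
From Coquelicot Require Import Coquelicot.
Open Scope R_scope.

Definition C2 := (C * C)%type.

Definition in_disc (z : C) : Prop := Cmod z < 1.

Definition symbidisc (w : C2) : Prop :=
  exists z1 z2 : C, in_disc z1 /\ in_disc z2 /\
    w = (Cplus z1 z2, Cmult z1 z2).

Definition L_orbit (a : R) (w : C2) : Prop :=
  exists z1 z2 : C, in_disc z1 /\ in_disc z2 /\
    Cmod (Cdiv (Cminus z1 z2) (Cminus (RtoC 1) (Cmult (Cconj z1) z2))) = a /\
    w = (Cplus z1 z2, Cmult z1 z2).

Definition C2_shift (p v : C2) (t : R) : C2 :=
  (Cplus (fst p) (Cmult (RtoC t) (fst v)), Cplus (snd p) (Cmult (RtoC t) (snd v))).

Definition C2_J (v : C2) : C2 := (Cmult Ci (fst v), Cmult Ci (snd v)).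

Definition C2_zero : C2 := (RtoC 0, RtoC 0).

Definition dir_deriv (f : C2 -> R) (v : C2) (p : C2) : R :=
  Derive (fun t => f (C2_shift p v t)) 0.

Definition dir_derivable (f : C2 -> R) (v : C2) (p : C2) : Prop :=
  ex_derive (fun t => f (C2_shift p v t)) 0.

Definition C2_on (U : C2 -> Prop) (f : C2 -> R) : Prop :=
  forall q, U q ->
    continuous f q /\
    forall v w : C2,
      dir_derivable f v q /\ continuous (dir_deriv f v) q /\
      dir_derivable (dir_deriv f v) w q /\
      continuous (dir_deriv (dir_deriv f v) w) q.

Definition hess (f : C2 -> R) (p v w : C2) : R := dir_deriv (dir_deriv f v) w p.

(** Levi form of f at p evaluated on v (viewed as a vector of C^2):
    sum_{j,k} d^2 f/dz_j d\bar z_k v_j \bar v_k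
      = (1/4) (D^2 f(p)(v,v) + D^2 f(p)(Jv,Jv)). *)
Definition levi_form (f : C2 -> R) (p v : C2) : R :=
  / 4 * (hess f p v v + hess f p (C2_J v) (C2_J v)).

Definition complex_tangent (f : C2 -> R) (p v : C2) : Prop :=
  dir_deriv f v p = 0 /\ dir_deriv f (C2_J v) p = 0.

Definition local_defining_function (Omega M : C2 -> Prop) (p : C2)
    (U : C2 -> Prop) (rho : C2 -> R) : Prop :=
  open U /\ U p /\ (forall q, U q -> Omega q) /\
  C2_on U rho /\
  (forall q, U q -> (M q <-> rho q = 0)) /\
  (forall q, U q -> exists v : C2, dir_deriv rho v q <> 0).

Definition real_hypersurface (Omega M : C2 -> Prop) : Prop :=
  (forall p, M p -> Omega p) /\
  forall p, M p -> exists U rho, local_defining_function Omega M p U rho.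

Definition strongly_pseudoconvex_hypersurface (Omega M : C2 -> Prop) : Prop :=
  (forall p, M p -> Omega p) /\
  forall p, M p -> exists U rho, local_defining_function Omega M p U rho /\
    forall v : C2, v <> C2_zero -> complex_tangent rho p v ->
      levi_form rho p v > 0.

From Stdlib Require Import Reals Lra Psatz FunctionalExtensionality.
From Coquelicot Require Import Coquelicot.
Open Scope R_scope.

(* Write points of G as (S, P) = (z1 + z2, z1 z2) and put X = |z1 - z2|^2,
   Y = |1 - conj z1 z2|^2, so that L_a = {X = A Y} with A = a^2.  Since
   |S^2 - 4P| = X and 2 + 2|P|^2 - |S|^2 = 2Y - X, the real polynomial
   rho = (2 - A)^2 |S^2 - 4P|^2 - A^2 (2 + 2|P|^2 - |S|^2)^2 pulls back to
   4 u h with u = X - A Y and h = (1 - A) X + A Y > 0, so it cuts out L_a in G.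
   G is open because it is cut out by 1 - |P|^2 > 0 and
   (1 - |P|^2)^2 - |S - conj S P|^2 = (1 - |z1|^2)(1 - |z2|^2) Y > 0.
   Off the diagonal z1 = z2 (which L_a avoids for a > 0) the map (z1, z2) |-> (S, P)
   is a local biholomorphism; through it the complex tangent space of L_a becomes
   the kernel of the holomorphic differential of u, on which the Levi form of rho
   is 4h/X times that of u.  This kernel is the line through
   (du/dz2, -du/dz1), where the Levi form of u equals 2 A^2 (1 - A) Y > 0. *)

Definition Cnorm2 (c : C) : R := fst c * fst c + snd c * snd c.

(* [simpl] evaluates the complex operations under the projections; unfolding [Cmult]
   instead would duplicate its arguments at every nesting level. *)
Ltac Cexpand := unfold Cnorm2 in *; simpl in *.

Lemma Cnorm2_ge0 (c : C) : 0 <= Cnorm2 c.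
Proof. destruct c; Cexpand; nra. Qed.

Lemma Cnorm2_eq0 (c : C) : Cnorm2 c = 0 -> c = 0%C.
Proof.
  destruct c as [x y]; Cexpand; intro H.
  assert (x = 0) by nra; assert (y = 0) by nra; subst; reflexivity.
Qed.

Lemma Cmult_integral_r (m w : C) : m <> 0%C -> (m * w = 0)%C -> w = 0%C.
Proof.
  intros Hm H; replace w with (/ m * (m * w))%C by (field; exact Hm).
  rewrite H; ring.
Qed.

Lemma Cmod_Cnorm2 (c : C) : Cmod c = sqrt (Cnorm2 c).
Proof. destruct c; unfold Cmod, Cnorm2; simpl; f_equal; ring. Qed.

Lemma in_disc_Cnorm2 (z : C) : in_disc z <-> Cnorm2 z < 1.
Proof.
  unfold in_disc; rewrite Cmod_Cnorm2; pose proof (Cnorm2_ge0 z).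
  split; intro H0.
  - apply Rnot_le_lt; intro Hc; apply (Rlt_not_le _ _ H0).
    rewrite <- sqrt_1; apply sqrt_le_1_alt, Hc.
  - rewrite <- sqrt_1; apply sqrt_lt_1_alt; lra.
Qed.

Lemma Csqrt_exists (w : C) : exists d : C, (d * d = w)%C.
Proof.
  destruct w as [x y].
  set (r := sqrt (x * x + y * y)).
  assert (Hrr : r * r = x * x + y * y) by (apply sqrt_sqrt; nra).
  assert (Hr : 0 <= r) by apply sqrt_pos.
  assert (Hx : - r <= x <= r) by (split; nra).
  set (d1 := sqrt ((r + x) / 2)); set (d2 := sqrt ((r - x) / 2)).
  assert (E1 : d1 * d1 = (r + x) / 2) by (apply sqrt_sqrt; lra).
  assert (E2 : d2 * d2 = (r - x) / 2) by (apply sqrt_sqrt; lra).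
  assert (E3 : d1 * d2 = Rabs y / 2).
  { unfold d1, d2; rewrite <- sqrt_mult_alt by lra.
    replace ((r + x) / 2 * ((r - x) / 2)) with (Rsqr (Rabs y / 2)).
    - apply sqrt_Rsqr; pose proof (Rabs_pos y); lra.
    - unfold Rsqr; replace (Rabs y / 2 * (Rabs y / 2)) with (Rabs (y * y) / 4)
        by (rewrite Rabs_mult; field).
      rewrite Rabs_pos_eq by nra; nra. }
  destruct (Rle_or_lt 0 y).
  - exists (d1, d2); rewrite Rabs_pos_eq in E3 by lra; unfold Cmult; simpl; f_equal; lra.
  - exists (d1, - d2); rewrite Rabs_left in E3 by lra; unfold Cmult; simpl; f_equal; nra.
Qed.

Inductive rpoly : Type :=
| RPconst (r : R)
| RPcoord (i : nat)
| RPadd (p q : rpoly)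
| RPmul (p q : rpoly).

Definition coord (i : nat) (q : C2) : R :=
  match i with
  | 0 => fst (fst q)
  | 1 => snd (fst q)
  | 2 => fst (snd q)
  | _ => snd (snd q)
  end.

Fixpoint rp_eval (p : rpoly) (q : C2) : R :=
  match p with
  | RPconst r => r
  | RPcoord i => coord i q
  | RPadd p1 p2 => rp_eval p1 q + rp_eval p2 q
  | RPmul p1 p2 => rp_eval p1 q * rp_eval p2 q
  end.

Fixpoint rp_deriv (v : C2) (p : rpoly) : rpoly :=
  match p with
  | RPconst _ => RPconst 0
  | RPcoord i => RPconst (coord i v)
  | RPadd p1 p2 => RPadd (rp_deriv v p1) (rp_deriv v p2)
  | RPmul p1 p2 => RPadd (RPmul (rp_deriv v p1) p2) (RPmul p1 (rp_deriv v p2))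
  end.

Lemma coord_C2_shift (i : nat) (q v : C2) (t : R) :
  coord i (C2_shift q v t) = coord i q + t * coord i v.
Proof.
  destruct q as [[a b] [c d]], v as [[a' b'] [c' d']].
  destruct i as [|[|[|i]]]; unfold C2_shift, Cplus, Cmult, RtoC; simpl; ring.
Qed.

Lemma C2_shift_0 (q v : C2) : C2_shift q v 0 = q.
Proof.
  destruct q as [[a b] [c d]], v as [[a' b'] [c' d']].
  unfold C2_shift, Cplus, Cmult, RtoC; simpl; f_equal; f_equal; ring.
Qed.

Lemma is_derive_rp_eval_shift (p : rpoly) (q v : C2) :
  is_derive (fun t => rp_eval p (C2_shift q v t)) 0 (rp_eval (rp_deriv v p) q).
Proof.
  induction p as [r | i | p1 IH1 p2 IH2 | p1 IH1 p2 IH2]; simpl.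
  - apply (is_derive_const (V := R_NormedModule)).
  - apply (is_derive_ext (fun t => coord i q + t * coord i v)).
    { intro t; rewrite coord_C2_shift; reflexivity. }
    auto_derive; auto; ring.
  - exact (is_derive_plus _ _ _ _ _ IH1 IH2).
  - pose proof (is_derive_mult _ _ _ _ _ IH1 IH2 Rmult_comm) as H.
    simpl in H; rewrite C2_shift_0 in H; exact H.
Qed.

Lemma dir_deriv_rp_eval (p : rpoly) (v : C2) :
  dir_deriv (rp_eval p) v = rp_eval (rp_deriv v p).
Proof.
  apply functional_extensionality; intro q.
  apply is_derive_unique, is_derive_rp_eval_shift.
Qed.

Lemma hess_rp_eval (p : rpoly) (q v w : C2) :
  hess (rp_eval p) q v w = rp_eval (rp_deriv w (rp_deriv v p)) q.
Proof. unfold hess; rewrite !dir_deriv_rp_eval; reflexivity. Qed.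

Lemma continuous_coord (i : nat) (q : C2) : continuous (coord i) q.
Proof.
  destruct i as [|[|[|i]]]; simpl.
  - apply (continuous_comp fst fst); apply continuous_fst.
  - apply (continuous_comp fst snd); [apply continuous_fst | apply continuous_snd].
  - apply (continuous_comp snd fst); [apply continuous_snd | apply continuous_fst].
  - apply (continuous_comp snd snd); apply continuous_snd.
Qed.

Lemma continuous_rp_eval (p : rpoly) (q : C2) : continuous (rp_eval p) q.
Proof.
  induction p; simpl.
  - apply continuous_const.
  - apply continuous_coord.
  - apply (continuous_plus (rp_eval p1) (rp_eval p2)); assumption.
  - apply (continuous_mult (rp_eval p1) (rp_eval p2)); assumption.
Qed.

Lemma C2_on_rp_eval (U : C2 -> Prop) (p : rpoly) : C2_on U (rp_eval p).
Proof.
  intros q _; split; [apply continuous_rp_eval |]; intros v w.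
  unfold dir_derivable; rewrite !dir_deriv_rp_eval.
  repeat split; try apply continuous_rp_eval; eexists; apply is_derive_rp_eval_shift.
Qed.

Lemma open_rp_eval_pos (p : rpoly) : open (fun q => 0 < rp_eval p q).
Proof.
  apply (open_comp (rp_eval p) (fun y => 0 < y)); [| apply open_gt].
  intros q _; apply continuous_rp_eval.
Qed.

Lemma open_rp_eval_neq0 (p : rpoly) : open (fun q => rp_eval p q <> 0).
Proof.
  apply (open_comp (rp_eval p) (fun y => y <> 0)); [| apply open_neq].
  intros q _; apply continuous_rp_eval.
Qed.

Definition RPsub (p q : rpoly) : rpoly := RPadd p (RPmul (RPconst (-1)) q).
Definition RPsq (p : rpoly) : rpoly := RPmul p p.

(* Complex-valued polynomials, as (real part, imaginary part). *)
Definition cpoly : Type := rpoly * rpoly.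
Definition CPscale (r : R) (p : cpoly) : cpoly :=
  (RPmul (RPconst r) (fst p), RPmul (RPconst r) (snd p)).
Definition CPsub (p q : cpoly) : cpoly := (RPsub (fst p) (fst q), RPsub (snd p) (snd q)).
Definition CPmul (p q : cpoly) : cpoly :=
  (RPsub (RPmul (fst p) (fst q)) (RPmul (snd p) (snd q)),
   RPadd (RPmul (fst p) (snd q)) (RPmul (snd p) (fst q))).
Definition CPconj (p : cpoly) : cpoly := (fst p, RPmul (RPconst (-1)) (snd p)).
Definition CPnorm2 (p : cpoly) : rpoly := RPadd (RPsq (fst p)) (RPsq (snd p)).
Definition Svar : cpoly := (RPcoord 0, RPcoord 1).
Definition Pvar : cpoly := (RPcoord 2, RPcoord 3).

Definition mob_num2 (z1 z2 : C) : R := Cnorm2 (z1 - z2).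
Definition mob_den2 (z1 z2 : C) : R := Cnorm2 (1 - Cconj z1 * z2).

Lemma mob_den2_pos (z1 z2 : C) : Cnorm2 z1 < 1 -> Cnorm2 z2 < 1 -> 0 < mob_den2 z1 z2.
Proof.
  destruct z1 as [x1 y1], z2 as [x2 y2]; unfold mob_den2; Cexpand; intros H1 H2.
  assert (x1 * x2 + y1 * y2 < 1)
    by (pose proof (pow2_ge_0 (x1 - x2)); pose proof (pow2_ge_0 (y1 - y2)); nra).
  pose proof (pow2_ge_0 (x1 * y2 - y1 * x2)); nra.
Qed.

Lemma pseudo_hyperbolic_eq (a : R) (z1 z2 : C) : 0 <= a -> 0 < mob_den2 z1 z2 ->
  Cmod (Cdiv (Cminus z1 z2) (Cminus (RtoC 1) (Cmult (Cconj z1) z2))) = a <->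
  mob_num2 z1 z2 = a * a * mob_den2 z1 z2.
Proof.
  intros Ha HY.
  assert (Hn : Cminus (RtoC 1) (Cmult (Cconj z1) z2) <> RtoC 0).
  { intro H; unfold mob_den2 in HY; rewrite H in HY; Cexpand; lra. }
  rewrite Cmod_div by exact Hn; rewrite !Cmod_Cnorm2; fold (mob_num2 z1 z2) (mob_den2 z1 z2).
  pose proof (Cnorm2_ge0 (z1 - z2)) as HX; fold (mob_num2 z1 z2) in HX.
  assert (HsY : 0 < sqrt (mob_den2 z1 z2)) by (apply sqrt_lt_R0; lra).
  split; intro H.
  - rewrite <- (sqrt_sqrt (mob_num2 z1 z2)) by lra.
    replace (sqrt (mob_num2 z1 z2)) with (a * sqrt (mob_den2 z1 z2)) by (rewrite <- H; field; lra).
    rewrite <- (sqrt_sqrt (mob_den2 z1 z2)) at 3 by lra; ring.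
  - rewrite H, sqrt_mult, sqrt_square by nra; field; lra.
Qed.

Definition symmetrize (z1 z2 : C) : C2 := ((z1 + z2)%C, (z1 * z2)%C).

Lemma symmetrize_surjective (q : C2) : exists z1 z2 : C, q = symmetrize z1 z2.
Proof.
  destruct q as [S P]; destruct (Csqrt_exists (S * S - 4 * P)%C) as [d Hd].
  exists (/ 2 * (S + d))%C, (/ 2 * (S - d))%C.
  destruct S as [s1 s2], P as [p1 p2], d as [d1 d2]; unfold symmetrize; Cexpand.
  injection Hd; intros H1 H2.
  f_equal; apply injective_projections; simpl; nra.
Qed.

Definition bidisc_margin1 : rpoly := RPsub (RPconst 1) (CPnorm2 Pvar).
Definition bidisc_margin2 : rpoly :=
  RPsub (RPsq bidisc_margin1) (CPnorm2 (CPsub Svar (CPmul (CPconj Svar) Pvar))).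

Lemma bidisc_margins_symmetrize (z1 z2 : C) :
  rp_eval bidisc_margin1 (symmetrize z1 z2) = 1 - Cnorm2 z1 * Cnorm2 z2 /\
  rp_eval bidisc_margin2 (symmetrize z1 z2) =
    (1 - Cnorm2 z1) * (1 - Cnorm2 z2) * mob_den2 z1 z2.
Proof. destruct z1, z2; unfold mob_den2; simpl; Cexpand; split; ring. Qed.

Lemma symbidisc_margins (q : C2) :
  symbidisc q <-> 0 < rp_eval bidisc_margin1 q /\ 0 < rp_eval bidisc_margin2 q.
Proof.
  split.
  - intros [z1 [z2 [D1 [D2 ->]]]]; rewrite in_disc_Cnorm2 in D1, D2.
    change (Cplus z1 z2, Cmult z1 z2) with (symmetrize z1 z2).
    destruct (bidisc_margins_symmetrize z1 z2) as [-> ->].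
    pose proof (mob_den2_pos _ _ D1 D2); pose proof (Cnorm2_ge0 z1).
    split; [nra |].
    apply Rmult_lt_0_compat; [apply Rmult_lt_0_compat |]; lra.
  - destruct (symmetrize_surjective q) as [z1 [z2 ->]].
    destruct (bidisc_margins_symmetrize z1 z2) as [-> ->]; intros [M1 M2].
    pose proof (Cnorm2_ge0 z1); pose proof (Cnorm2_ge0 z2).
    pose proof (Cnorm2_ge0 (1 - Cconj z1 * z2)); fold (mob_den2 z1 z2) in *.
    assert (0 < (1 - Cnorm2 z1) * (1 - Cnorm2 z2)) by nra.
    exists z1, z2; rewrite !in_disc_Cnorm2; repeat split; nra.
Qed.

Lemma open_symbidisc : open symbidisc.
Proof.
  apply (open_ext (fun q => 0 < rp_eval bidisc_margin1 q /\ 0 < rp_eval bidisc_margin2 q)).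
  { intro q; symmetry; apply symbidisc_margins. }
  apply open_and; apply open_rp_eval_pos.
Qed.

Definition rho (A : R) : rpoly :=
  RPsub (RPmul (RPconst ((2 - A) * (2 - A))) (CPnorm2 (CPsub (CPmul Svar Svar) (CPscale 4 Pvar))))
        (RPmul (RPconst (A * A))
               (RPsq (RPsub (RPadd (RPconst 2) (RPmul (RPconst 2) (CPnorm2 Pvar))) (CPnorm2 Svar)))).

Definition ufun (A : R) (z1 z2 : C) : R := mob_num2 z1 z2 - A * mob_den2 z1 z2.
Definition hfun (A : R) (z1 z2 : C) : R := (1 - A) * mob_num2 z1 z2 + A * mob_den2 z1 z2.

Lemma rho_symmetrize (A : R) (z1 z2 : C) :
  rp_eval (rho A) (symmetrize z1 z2) = 4 * ufun A z1 z2 * hfun A z1 z2.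
Proof. destruct z1, z2; unfold ufun, hfun, mob_num2, mob_den2; simpl; Cexpand; ring. Qed.

Lemma hfun_pos (A : R) (z1 z2 : C) :
  0 < A -> A < 1 -> 0 < mob_den2 z1 z2 -> 0 < hfun A z1 z2.
Proof.
  intros; unfold hfun; pose proof (Cnorm2_ge0 (z1 - z2)); fold (mob_num2 z1 z2) in *.
  nra.
Qed.

Lemma L_orbit_iff_rho_zero (a : R) (q : C2) : 0 < a -> a < 1 -> symbidisc q ->
  L_orbit a q <-> rp_eval (rho (a * a)) q = 0.
Proof.
  intros Ha0 Ha1 [z1 [z2 [D1 [D2 ->]]]].
  change (Cplus z1 z2, Cmult z1 z2) with (symmetrize z1 z2).
  rewrite in_disc_Cnorm2 in D1, D2.
  split.
  - intros [w1 [w2 [E1 [E2 [Hd Hw]]]]]; rewrite in_disc_Cnorm2 in E1, E2.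
    change (symmetrize z1 z2 = symmetrize w1 w2) in Hw; rewrite Hw, rho_symmetrize.
    apply pseudo_hyperbolic_eq in Hd; [| lra | apply mob_den2_pos; assumption].
    unfold ufun; rewrite Hd; ring.
  - rewrite rho_symmetrize; intro H0.
    assert (Hh : 0 < hfun (a * a) z1 z2) by (apply hfun_pos, mob_den2_pos; nra).
    assert (Hu : ufun (a * a) z1 z2 = 0) by nra.
    exists z1, z2; rewrite !in_disc_Cnorm2; repeat split; try assumption.
    apply pseudo_hyperbolic_eq; [lra | apply mob_den2_pos; assumption |].
    unfold ufun in Hu; lra.
Qed.

(* [ugrad1], [ugrad2] are the Wirtinger derivatives du/dz1, du/dz2 of [u = ufun A];
   [du], [dh] are the holomorphic differentials of u and h, and [Lu], [Lh] their
   Levi forms, at (z1, z2) and applied to (W1, W2). *)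
Definition ugrad1 (A : R) (z1 z2 : C) : C :=
  (Cconj (z1 - z2) + A * ((1 - Cconj z1 * z2) * Cconj z2))%C.
Definition ugrad2 (A : R) (z1 z2 : C) : C :=
  (- Cconj (z1 - z2) + A * (Cconj z1 * (1 - z1 * Cconj z2)))%C.
Definition du (A : R) (z1 z2 W1 W2 : C) : C :=
  (ugrad1 A z1 z2 * W1 + ugrad2 A z1 z2 * W2)%C.
Definition dh (A : R) (z1 z2 W1 W2 : C) : C :=
  ((1 - A) * (Cconj (z1 - z2) * (W1 - W2)) +
   A * (- ((1 - Cconj z1 * z2) * Cconj z2) * W1 - (Cconj z1 * (1 - z1 * Cconj z2)) * W2))%C.

Definition dsymmetrize (z1 z2 W1 W2 : C) : C2 := ((W1 + W2)%C, (z2 * W1 + z1 * W2)%C).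

Lemma dsymmetrize_pullback (z1 z2 vs vp : C) :
  dsymmetrize z1 z2 (z1 * vs - vp) (vp - z2 * vs) = (((z1 - z2) * vs)%C, ((z1 - z2) * vp)%C).
Proof.
  destruct z1, z2, vs, vp; unfold dsymmetrize; Cexpand.
  f_equal; apply injective_projections; simpl; ring.
Qed.

Lemma rho_deriv_dsymmetrize (A : R) (z1 z2 W1 W2 : C) :
  rp_eval (rp_deriv (dsymmetrize z1 z2 W1 W2) (rho A)) (symmetrize z1 z2) =
  8 * fst (hfun A z1 z2 * du A z1 z2 W1 W2 + ufun A z1 z2 * dh A z1 z2 W1 W2)%C.
Proof.
  destruct z1, z2, W1, W2.
  unfold ufun, hfun, mob_num2, mob_den2, du, dh, ugrad1, ugrad2, dsymmetrize; Cexpand.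
  ring.
Qed.

(* The left side is (z1 - z2) times twice the holomorphic derivative of rho along
   (vs, vp), and (z1 vs - vp, vp - z2 vs) is mapped by [dsymmetrize] to
   (z1 - z2) (vs, vp). *)
Lemma rho_holomorphic_deriv (A : R) (z1 z2 vs vp : C) :
  Cmult (z1 - z2) (rp_eval (rp_deriv (vs, vp) (rho A)) (symmetrize z1 z2),
                   - rp_eval (rp_deriv (C2_J (vs, vp)) (rho A)) (symmetrize z1 z2)) =
  (8 * (hfun A z1 z2 * du A z1 z2 (z1 * vs - vp) (vp - z2 * vs) +
        ufun A z1 z2 * dh A z1 z2 (z1 * vs - vp) (vp - z2 * vs)))%C.
Proof.
  destruct z1, z2, vs, vp.
  unfold ufun, hfun, mob_num2, mob_den2, du, dh, ugrad1, ugrad2, C2_J; Cexpand.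
  apply injective_projections; simpl; ring.
Qed.

Definition Lu (A : R) (z1 z2 W1 W2 : C) : R :=
  Cnorm2 (W1 - W2) - A * Cnorm2 (z2 * W1 + z1 * W2) + 2 * A * fst (W1 * Cconj W2)%C.
Definition Lh (A : R) (z1 z2 W1 W2 : C) : R :=
  (1 - A) * Cnorm2 (W1 - W2) + A * (Cnorm2 (z2 * W1 + z1 * W2) - 2 * fst (W1 * Cconj W2)%C).

Lemma levi_form_rho_symmetrize (A : R) (z1 z2 vs vp : C) :
  let W1 := (z1 * vs - vp)%C in
  let W2 := (vp - z2 * vs)%C in
  mob_num2 z1 z2 * levi_form (rp_eval (rho A)) (symmetrize z1 z2) (vs, vp) =
  4 * (hfun A z1 z2 * Lu A z1 z2 W1 W2 + ufun A z1 z2 * Lh A z1 z2 W1 W2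
       + 2 * fst (du A z1 z2 W1 W2 * Cconj (dh A z1 z2 W1 W2))%C).
Proof.
  intros W1 W2; subst W1 W2; unfold levi_form; rewrite !hess_rp_eval.
  unfold ufun, hfun, mob_num2, mob_den2, du, dh, ugrad1, ugrad2, Lu, Lh, C2_J; Cexpand.
  field.
Qed.

Lemma Lu_ugrad_normal (A : R) (z1 z2 : C) :
  0 < mob_den2 z1 z2 -> mob_num2 z1 z2 = A * mob_den2 z1 z2 ->
  Lu A z1 z2 (ugrad2 A z1 z2) (- ugrad1 A z1 z2) = 2 * A * A * (1 - A) * mob_den2 z1 z2.
Proof.
  intros HY HX.
  assert (HA : A = mob_num2 z1 z2 / mob_den2 z1 z2) by (rewrite HX; field; lra).
  subst A; clear HX.
  unfold mob_num2, mob_den2, ugrad1, ugrad2, Lu in *; Cexpand.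
  field; lra.
Qed.

Lemma Lu_scale (A : R) (z1 z2 m W1 W2 : C) :
  Lu A z1 z2 (m * W1) (m * W2) = Cnorm2 m * Lu A z1 z2 W1 W2.
Proof. unfold Lu; Cexpand; ring. Qed.

Lemma covector_kernel_collinear (c1 c2 W1 W2 : C) :
  (c1 * W1 + c2 * W2 = 0)%C ->
  (RtoC (Cnorm2 c1 + Cnorm2 c2) * W1 = (W1 * Cconj c2 - W2 * Cconj c1) * c2)%C /\
  (RtoC (Cnorm2 c1 + Cnorm2 c2) * W2 = (W1 * Cconj c2 - W2 * Cconj c1) * - c1)%C.
Proof.
  intro H; split; apply Ceq_minus.
  - transitivity ((c1 * W1 + c2 * W2) * Cconj c1)%C;
      [apply injective_projections; Cexpand; ring | rewrite H; ring].
  - transitivity ((c1 * W1 + c2 * W2) * Cconj c2)%C;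
      [apply injective_projections; Cexpand; ring | rewrite H; ring].
Qed.

Section OnTheOrbit.

Variables (A : R) (z1 z2 : C).
Hypotheses (HA0 : 0 < A) (HA1 : A < 1) (HY : 0 < mob_den2 z1 z2)
  (HXY : mob_num2 z1 z2 = A * mob_den2 z1 z2).

Lemma Lu_ugrad_normal_pos : 0 < Lu A z1 z2 (ugrad2 A z1 z2) (- ugrad1 A z1 z2).
Proof.
  rewrite Lu_ugrad_normal by assumption.
  apply Rmult_lt_0_compat; [| exact HY].
  assert (0 < A * A) by nra; nra.
Qed.

Lemma ugrad_nonzero : 0 < Cnorm2 (ugrad1 A z1 z2) + Cnorm2 (ugrad2 A z1 z2).
Proof.
  pose proof Lu_ugrad_normal_pos as Hpos.
  pose proof (Cnorm2_ge0 (ugrad1 A z1 z2)); pose proof (Cnorm2_ge0 (ugrad2 A z1 z2)).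
  apply Rnot_le_lt; intro Hle.
  assert (E1 : ugrad1 A z1 z2 = 0%C) by (apply Cnorm2_eq0; lra).
  assert (E2 : ugrad2 A z1 z2 = 0%C) by (apply Cnorm2_eq0; lra).
  rewrite E1, E2 in Hpos; unfold Lu in Hpos; Cexpand; lra.
Qed.

(* The kernel of du is the line through (ugrad2, -ugrad1), and Lu is a Hermitian
   form which is positive there. *)
Lemma Lu_pos_on_ugrad_kernel (W1 W2 : C) :
  (W1, W2) <> C2_zero -> du A z1 z2 W1 W2 = 0%C -> 0 < Lu A z1 z2 W1 W2.
Proof.
  intros HW Hdu.
  set (r := Cnorm2 (ugrad1 A z1 z2) + Cnorm2 (ugrad2 A z1 z2)).
  set (mu := (W1 * Cconj (ugrad2 A z1 z2) - W2 * Cconj (ugrad1 A z1 z2))%C).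
  pose proof ugrad_nonzero as Hr; fold r in Hr.
  destruct (covector_kernel_collinear _ _ _ _ Hdu) as [E1 E2]; fold r mu in E1, E2.
  assert (Hmu : 0 < Cnorm2 mu).
  { destruct (Cnorm2_ge0 mu) as [| Hmu]; [assumption |]; exfalso.
    apply HW; symmetry in Hmu; apply Cnorm2_eq0 in Hmu.
    rewrite Hmu, Cmult_0_l in E1, E2.
    assert (Hr0 : RtoC r <> 0%C) by (intro H; injection H; lra).
    unfold C2_zero; f_equal; eapply Cmult_integral_r; eassumption. }
  assert (Hscale : r * r * Lu A z1 z2 W1 W2 =
                   Cnorm2 mu * Lu A z1 z2 (ugrad2 A z1 z2) (- ugrad1 A z1 z2)).
  { transitivity (Cnorm2 (RtoC r) * Lu A z1 z2 W1 W2); [unfold Cnorm2; simpl; ring |].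
    rewrite <- Lu_scale, E1, E2, Lu_scale; reflexivity. }
  pose proof Lu_ugrad_normal_pos.
  assert (0 < r * r * Lu A z1 z2 W1 W2) by (rewrite Hscale; apply Rmult_lt_0_compat; assumption).
  nra.
Qed.

Lemma levi_form_rho_pos (v : C2) :
  v <> C2_zero -> complex_tangent (rp_eval (rho A)) (symmetrize z1 z2) v ->
  levi_form (rp_eval (rho A)) (symmetrize z1 z2) v > 0.
Proof.
  destruct v as [vs vp]; intros Hv [T1 T2].
  rewrite dir_deriv_rp_eval in T1, T2.
  assert (HX : 0 < mob_num2 z1 z2) by (rewrite HXY; apply Rmult_lt_0_compat; assumption).
  assert (Hu : ufun A z1 z2 = 0) by (unfold ufun; lra).
  pose proof (hfun_pos A z1 z2 HA0 HA1 HY) as Hh.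
  assert (Hz : (z1 - z2)%C <> 0%C).
  { intro H; unfold mob_num2 in HX; rewrite H in HX; Cexpand; lra. }
  set (W1 := (z1 * vs - vp)%C); set (W2 := (vp - z2 * vs)%C).
  assert (Hdu : du A z1 z2 W1 W2 = 0%C).
  { pose proof (rho_holomorphic_deriv A z1 z2 vs vp) as E.
    rewrite T1, T2, Hu in E; fold W1 W2 in E.
    assert (Hm : RtoC (8 * hfun A z1 z2) <> 0%C) by (intro H; injection H; lra).
    apply (Cmult_integral_r _ _ Hm).
    transitivity (8 * (hfun A z1 z2 * du A z1 z2 W1 W2 + 0 * dh A z1 z2 W1 W2))%C;
      [rewrite RtoC_mult; ring |].
    rewrite <- E; apply injective_projections; Cexpand; ring. }
  assert (HW : (W1, W2) <> C2_zero).
  { intro H0; apply Hv.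
    pose proof (dsymmetrize_pullback z1 z2 vs vp) as P; fold W1 W2 in P.
    assert (H1 : W1 = 0%C) by exact (f_equal fst H0).
    assert (H2 : W2 = 0%C) by exact (f_equal snd H0).
    rewrite H1, H2 in P; unfold dsymmetrize in P.
    assert (P1 : (0 + 0)%C = ((z1 - z2) * vs)%C) by exact (f_equal fst P).
    assert (P2 : (z2 * 0 + z1 * 0)%C = ((z1 - z2) * vp)%C) by exact (f_equal snd P).
    unfold C2_zero; f_equal; apply (Cmult_integral_r _ _ Hz);
      [rewrite <- P1 | rewrite <- P2]; ring. }
  pose proof (levi_form_rho_symmetrize A z1 z2 vs vp) as L; cbv zeta in L; fold W1 W2 in L.
  rewrite Hu, Hdu, Cmult_0_l in L; unfold RtoC in L; cbn [fst] in L.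
  pose proof (Lu_pos_on_ugrad_kernel W1 W2 HW Hdu).
  assert (0 < mob_num2 z1 z2 * levi_form (rp_eval (rho A)) (symmetrize z1 z2) (vs, vp))
    by (rewrite L; nra).
  nra.
Qed.

Lemma rho_deriv_ugrad_pos :
  0 < rp_eval (rp_deriv (dsymmetrize z1 z2 (Cconj (ugrad1 A z1 z2)) (Cconj (ugrad2 A z1 z2)))
                        (rho A)) (symmetrize z1 z2).
Proof.
  rewrite rho_deriv_dsymmetrize.
  replace (ufun A z1 z2) with 0 by (unfold ufun; lra).
  pose proof (hfun_pos A z1 z2 HA0 HA1 HY); pose proof ugrad_nonzero.
  replace (fst _) with (hfun A z1 z2 * (Cnorm2 (ugrad1 A z1 z2) + Cnorm2 (ugrad2 A z1 z2)))
    by (unfold du; Cexpand; ring).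
  nra.
Qed.

End OnTheOrbit.

(* [v0] pushes forward the conjugate gradient of u, so rho increases along it at
   the base point. *)
Lemma rho_local_defining_function (a : R) (z1 z2 : C) :
  0 < a -> a < 1 -> Cnorm2 z1 < 1 -> Cnorm2 z2 < 1 ->
  mob_num2 z1 z2 = a * a * mob_den2 z1 z2 ->
  let v0 := dsymmetrize z1 z2 (Cconj (ugrad1 (a * a) z1 z2)) (Cconj (ugrad2 (a * a) z1 z2)) in
  local_defining_function symbidisc (L_orbit a) (symmetrize z1 z2)
    (fun q => symbidisc q /\ rp_eval (rp_deriv v0 (rho (a * a))) q <> 0)
    (rp_eval (rho (a * a))).
Proof.
  intros Ha0 Ha1 D1 D2 Hd v0.
  assert (HA0 : 0 < a * a) by nra; assert (HA1 : a * a < 1) by nra.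
  pose proof (mob_den2_pos _ _ D1 D2) as HY.
  pose proof (rho_deriv_ugrad_pos (a * a) z1 z2 HA0 HA1 HY Hd) as Hg.
  split; [| split; [| split; [| split; [| split]]]].
  - apply open_and; [apply open_symbidisc | apply open_rp_eval_neq0].
  - split; [exists z1, z2; rewrite !in_disc_Cnorm2; auto | fold v0 in Hg; lra].
  - intros q [Hq _]; exact Hq.
  - apply C2_on_rp_eval.
  - intros q [Hq _]; apply L_orbit_iff_rho_zero; assumption.
  - intros q [_ Hq]; exists v0; rewrite dir_deriv_rp_eval; exact Hq.
Qed.

Theorem theorem2p11 (a : R) (ha0 : 0 < a) (ha1 : a < 1) :
  strongly_pseudoconvex_hypersurface symbidisc (L_orbit a).
Proof.
  split.
  - intros q [z1 [z2 [D1 [D2 [_ ->]]]]]; exists z1, z2; auto.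
  - intros p [z1 [z2 [D1 [D2 [Hd ->]]]]].
    rewrite in_disc_Cnorm2 in D1, D2.
    pose proof (mob_den2_pos _ _ D1 D2) as HY.
    apply pseudo_hyperbolic_eq in Hd; [| lra | exact HY].
    do 2 eexists; split.
    + apply rho_local_defining_function; assumption.
    + apply levi_form_rho_pos; [nra | nra | exact HY | exact Hd].
Qed.
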